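(* Let $k$ be a field and $A$ a finite-dimensional monomial algebra with two blocks $A_1$ and $A_2$. Let $B$ be the algebra obtained from $A$ by gluing idempotents (vertices) $e_1\in A_1$ and $e_n\in A_2$. Then the radical embedding $B\hookrightarrow A$ restricts to a radical embedding $Z(B)\hookrightarrow Z(A)$. In particular $\dim_kZ(A)=\dim_kZ(B)+1$.
   Context: A monomial algebra is $A=kQ_A/I_A$ with $Q_A$ a finite quiver with vertices $e_1,\dots,e_n$ and $I_A$ an admissible ideal generated by paths. Gluing $e_1,e_n$ (assumed non-isolated): $B$ is the subalgebra of $A$ generated by $e_1+e_n$, $e_2,\dots,e_{n-1}$ and all arrows; $B\cong kQ_B/I_B$ where $Q_B$ is $Q_A$ with $e_1,e_n$ identified and $I_B$ is generated by $I_A$ and all newly formed length-2 paths through the identified vertex. A radical embedding is an algebra monomorphism $\phi:B\to A$ with $\phi(\mathrm{rad}\,B)=\mathrm{rad}\,A$. $Z(\cdot)$ denotes the center. *)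

From HB Require Import structures.
From mathcomp Require Import all_boot all_order all_algebra.
From mathcomp Require Import falgebra.
Set Implicit Arguments. Unset Strict Implicit. Unset Printing Implicit Defensive.
Import GRing.Theory.
Local Open Scope ring_scope.

Section Monomial.
Variables (K : fieldType) (A : falgType K).
Variables (V E : finType) (src tgt : E -> V).

(* p = a_1 a_2 ... a_m is a path starting at vertex x (left-to-right
   composition: tgt a_i = src a_(i+1)); the empty sequence is the trivial
   path e_x. *)
Definition is_walk (x : V) (p : seq E) : bool :=
  sorted (fun a b => tgt a == src b) p &&
  (if p is a :: _ then src a == x else true).

Definition has_rel (rels : pred (seq E)) (p : seq E) : bool :=
  [exists i : 'I_(size p).+1, exists j : 'I_(size p).+1,
     (i <= j)%N && rels (drop i (take j p))].

Fixpoint words (N : nat) : seq (seq E) :=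
  if N is N'.+1 then [::] :: [seq a :: w | a <- enum E, w <- words N']
  else [:: [::]].

Definition wval (e : V -> A) (a : E -> A) (x : V) (p : seq E) : A :=
  e x * \prod_(b <- p) a b.

Definition nzpaths (rels : pred (seq E)) (N : nat) : seq (V * seq E) :=
  [seq q <- [seq (x, p) | x <- enum V, p <- words N]
     | is_walk q.1 q.2 && ~~ has_rel rels q.2].

(* A = kQ/I, where Q = (V, E, src, tgt), I is the (admissible) ideal
   generated by the paths in rels, e x is the image of the trivial path at x
   and a b the image of the arrow b.  Admissibility: every relation has length
   >= 2 and every path of length >= N lies in I. *)
Definition monomial_presentation (rels : pred (seq E)) (N : nat)
    (e : V -> A) (a : E -> A) : Prop :=
  [/\ (forall p, rels p -> (2 <= size p)%N),
      (forall x p, is_walk x p -> (N <= size p)%N -> has_rel rels p),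
      [/\ (forall x y, e x * e y = if x == y then e x else 0),
      \sum_(x : V) e x = 1 &
      (forall b, e (src b) * a b = a b /\ a b * e (tgt b) = a b)],
      (forall x p, is_walk x p -> has_rel rels p -> wval e a x p = 0)
    & basis_of fullv [seq wval e a q.1 q.2 | q <- nzpaths rels N]].

(* B = subalgebra of A generated by e u + e v, the other e x, and all arrows *)
Definition glue_gens (e : V -> A) (a : E -> A) (u v : V) : seq A :=
  (e u + e v) :: [seq e x | x <- enum V & (x != u) && (x != v)]
              ++ [seq a b | b <- enum E].

Definition glued (e : V -> A) (a : E -> A) (u v : V) : {aspace A} :=
  <<span (glue_gens e a u v)>>%AS.

Definition non_isolated (x : V) : Prop := exists b, (src b == x) || (tgt b == x).

End Monomial.

Section Blocks.
Variables (K : fieldType) (A : falgType K).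

Definition central_idem (c : A) : Prop := c \in 'Z(fullv)%VS /\ c * c = c.

(* c is a primitive central idempotent, i.e. cA is a block of A *)
Definition block_idem (c : A) : Prop :=
  [/\ central_idem c, c != 0 &
      forall d, central_idem d -> d * c = d -> d = 0 \/ d = c].

Definition jrad (U : {vspace A}) (x : A) : Prop :=
  x \in U /\ forall y, y \in U ->
    exists2 z, z \in U & z * (1 - y * x) = 1 /\ (1 - y * x) * z = 1.

End Blocks.

From HB Require Import structures.
From mathcomp Require Import all_boot all_order all_algebra.
From mathcomp Require Import falgebra.
From mathcomp Require Import zify.
Import GRing.Theory.
Local Open Scope ring_scope.
Set Implicit Arguments. Unset Strict Implicit. Unset Printing Implicit Defensive.

(* For each vertex x, the coefficient of e_x in the path basis is a character
   chi_x : A -> k, and the common kernel of the chi_x, spanned by the paths of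
   positive length, is nilpotent.  The glued algebra B is exactly the equalizer
   {y | chi_u y = chi_v y} of the two glued vertices.  An element of Z(B)
   commutes with the arrows and with every e_x, x <> u, v; it also commutes with
   e_u because u and v lie in different blocks, so e_u A e_v = e_v A e_u = 0.
   Hence Z(B) is the intersection of Z(A) with B, and since the block
   idempotent c_1 has chi_u c_1 = 1 and chi_v c_1 = 0, Z(A) = Z(B) (+) k c_1.
   Finally, in any subalgebra containing 1 the Jacobson radical consists of the
   elements killed by every character (their common kernel being a nil ideal),
   so Z(B) and Z(A) have the same radical. *)

Lemma geometric_inverse (R : pzRingType) (t : R) n : t ^+ n = 0 ->
  (\sum_(i < n) t ^+ i) * (1 - t) = 1 /\ (1 - t) * \sum_(i < n) t ^+ i = 1.
Proof.
move=> tn0; have inv_r : (1 - t) * \sum_(i < n) t ^+ i = 1.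
  by rewrite -opprB mulNr -subrX1 tn0 sub0r opprK.
have commSt : GRing.comm (\sum_(i < n) t ^+ i) t.
  by apply/commr_sym/commr_sum => i _; apply/commrX/commr_refl.
by rewrite (commrB (commr1 _) commSt).
Qed.

Section Characters.
Variables (K : fieldType) (A : falgType K).

Lemma coord_mul_expand (f : {scalar A}) n (X : n.-tuple A) y z :
  y \in span X -> z \in span X ->
  f (y * z) = \sum_i \sum_j coord X i y * coord X j z * f (X`_i * X`_j).
Proof.
move=> /coord_span {1}-> /coord_span {1}->; rewrite mulr_suml linear_sum.
apply: eq_bigr => i _; rewrite mulr_sumr linear_sum; apply: eq_bigr => j _.
by rewrite -scalerAl -scalerAr !linearZ /= mulrA.
Qed.

Lemma scalar_mul_span (f : {scalar A}) n (X : n.-tuple A) :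
  (forall y, y \in span X) ->
  (forall i j : 'I_n, f (X`_i * X`_j) = f X`_i * f X`_j) ->
  forall y z, f (y * z) = f y * f z.
Proof.
move=> spanX fM y z; rewrite (coord_mul_expand _ (spanX y) (spanX z)).
rewrite {2}(coord_span (spanX y)) {2}(coord_span (spanX z)) !linear_sum.
rewrite mulr_suml; apply: eq_bigr => i _; rewrite mulr_sumr.
by apply: eq_bigr => j _; rewrite fM !linearZ /= mulrACA.
Qed.

Variables (I : Type) (chi : I -> {scalar A}) (N : nat).
Hypotheses (chiM : forall i y z, chi i (y * z) = chi i y * chi i z)
           (chi1 : forall i, chi i 1 = 1)
           (chi_nil : forall t, (forall i, chi i t = 0) -> t ^+ N = 0).

Lemma jrad_charP (U : {aspace A}) x : 1 \in U ->
  jrad U x <-> x \in U /\ forall i, chi i x = 0.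
Proof.
move=> U1; split=> [[Ux Uinv] | [Ux chix0]].
  split=> // i; apply/eqP/negP => /negP chix_neq0.
  have [z _ [zK _]] := Uinv _ (memvZ (chi i x)^-1 U1).
  move/(congr1 (chi i))/eqP: zK; rewrite chiM linearB /= chiM linearZ /= chi1.
  by rewrite mulr1 mulVf // subrr mulr0 eq_sym oner_eq0.
split=> // y Uy; set t := y * x.
have Ut k : t ^+ k \in U by elim: k => [|k IH]; rewrite ?expr0 // exprS !memvM.
have t_nil : t ^+ N = 0 by apply: chi_nil => i; rewrite chiM chix0 mulr0.
exists (\sum_(k < N) t ^+ k); first exact: memv_suml.
exact: geometric_inverse.
Qed.

End Characters.

Section Idempotents.
Variables (K : fieldType) (A : falgType K).

Lemma central_idem_comm (c : A) : central_idem c -> forall y, c * y = y * c.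
Proof.
case=> + _; rewrite memv_cap => /andP[_ /centvP c_comm] y.
exact: c_comm (memvf y).
Qed.

Lemma across_blocks_eq0 (c1 c2 f g y : A) :
  central_idem c1 -> c1 + c2 = 1 -> f * c1 = f -> g * c2 = g -> f * y * g = 0.
Proof.
move=> c1Z c12 fc1 gc2; have c2E : c2 = 1 - c1 by rewrite -c12 addrC addKr.
have gc1 : g * c1 = 0.
  by rewrite -gc2 -mulrA c2E mulrBl mul1r (proj2 c1Z) subrr mulr0.
by rewrite -fc1 -!mulrA (central_idem_comm c1Z) -!mulrA gc1 !mulr0.
Qed.

End Idempotents.

Lemma comm_idem_unlinked (R : pzRingType) (V : finType) (e : V -> R) u v z :
  (forall x y, e x * e y = if x == y then e x else 0) -> \sum_x e x = 1 ->
  (forall y, e u * y * e v = 0) -> (forall y, e v * y * e u = 0) ->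
  (forall x, x != u -> x != v -> e x * z = z * e x) -> e u * z = z * e u.
Proof.
move=> eM sum_e uv0 vu0 z_comm.
have -> : e u * z = e u * z * e u.
  rewrite -{1}[e u * z]mulr1 -sum_e mulr_sumr (bigD1 u) //= big1 ?addr0 //.
  move=> x xu.
  have [-> // | xv] := eqVneq x v.
  by rewrite -mulrA -z_comm // mulrA eM eq_sym (negbTE xu) mul0r.
rewrite -mulrA; apply/esym.
rewrite -{1}[z * e u]mul1r -sum_e mulr_suml (bigD1 u) //= big1 ?addr0 //.
move=> x xu.
have [-> | xv] := eqVneq x v; first by rewrite mulrA.
by rewrite mulrA z_comm // -mulrA eM (negbTE xu) mulr0.
Qed.

Lemma memv_prod (K : fieldType) (A : falgType K) (U : {aspace A}) (I : Type)
    (r : seq I) (F : I -> A) :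
  1 \in U -> (forall i, F i \in U) -> \prod_(i <- r) F i \in U.
Proof.
move=> U1 FU; elim: r => [|i r IH]; first by rewrite big_nil.
by rewrite big_cons memvM.
Qed.

Section MonomialAlgebra.
Variables (K : fieldType) (A : falgType K) (V E : finType) (src tgt : E -> V).
Variables (rels : pred (seq E)) (N : nat) (e : V -> A) (a : E -> A).
Hypothesis presA : monomial_presentation src tgt rels N e a.

Local Notation walk := (is_walk src tgt).
Local Notation wv := (wval e a).
Local Notation paths := (nzpaths src tgt rels N).
Local Notation P := (in_tuple paths).
Local Notation n := (size paths).
Local Notation pbasis := (map_tuple (fun q => wv q.1 q.2) P).
Local Notation bv i := (wv (tnth P i).1 (tnth P i).2).
Local Notation coordA := (coord pbasis).

Lemma mul_ee x y : e x * e y = if x == y then e x else 0.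
Proof. by case: presA => _ _ []. Qed.

Lemma sum_e : \sum_x e x = 1.
Proof. by case: presA => _ _ []. Qed.

Lemma mul_src_a b : e (src b) * a b = a b.
Proof. by case: presA => _ _ [_ _ /(_ b)[]]. Qed.

Lemma mul_a_tgt b : a b * e (tgt b) = a b.
Proof. by case: presA => _ _ [_ _ /(_ b)[]]. Qed.

Lemma walk_cons x b p : walk x (b :: p) = (src b == x) && walk (tgt b) p.
Proof.
rewrite /is_walk /=; case: p => [|c p] /=; first by rewrite andbT.
by rewrite (eq_sym (src c)); case: (_ == _); case: (_ == _); case: path.
Qed.

Lemma walk_cat x p p' :
  walk x p -> walk (last x (map tgt p)) p' -> walk x (p ++ p').
Proof.
elim: p x => [|b p IH] x //=.
by rewrite !walk_cons => /andP[-> /IH].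
Qed.

Lemma wval_nil x : wv x [::] = e x.
Proof. by rewrite /wval big_nil mulr1. Qed.

Lemma wval_cons x b p : src b = x -> wv x (b :: p) = a b * wv (tgt b) p.
Proof.
by move=> <-; rewrite /wval big_cons mulrA mul_src_a -{1}mul_a_tgt -!mulrA.
Qed.

Lemma wval_arrow b : a b = wv (src b) [:: b].
Proof. by rewrite wval_cons // wval_nil mul_a_tgt. Qed.

Lemma wval_mul_e x p y : walk x p ->
  wv x p * e y = if last x (map tgt p) == y then wv x p else 0.
Proof.
elim: p x => [|b p IH] x /=; first by rewrite wval_nil mul_ee.
rewrite walk_cons => /andP[/eqP bx w]; rewrite wval_cons // -mulrA IH //.
by case: ifP; rewrite ?mulr0.
Qed.

Lemma wvalM x p y p' : walk x p ->
  wv x p * wv y p' = if last x (map tgt p) == y then wv x (p ++ p') else 0.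
Proof.
move=> w; rewrite {2}/wval mulrA wval_mul_e //.
by case: ifP; rewrite ?mul0r // /wval big_cat mulrA.
Qed.

Lemma mem_words M p : (p \in words E M) = (size p <= M)%N.
Proof.
elim: M p => [|M IH] [|b p] //=; rewrite inE //=.
apply/allpairsP/idP => [[[c w] [_ /= wM [_ ->]]] | pM].
  by rewrite ltnS -IH.
by exists (b, p); rewrite mem_enum IH.
Qed.

Lemma mem_paths x p :
  ((x, p) \in paths) = [&& walk x p, ~~ has_rel rels p & (size p <= N)%N].
Proof.
rewrite mem_filter /= andbA; congr (_ && _).
apply/allpairsP/idP => [[[y w] [_ /= wN [_ ->]]] | pN].
  by rewrite -mem_words.
by exists (x, p); rewrite mem_enum mem_words.
Qed.

Lemma wval_eq0_or_path x p : walk x p -> wv x p = 0 \/ (x, p) \in paths.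
Proof.
move=> w; have [r|nr] := boolP (has_rel rels p).
  by left; case: presA => _ _ _ /(_ x p w r).
right; rewrite mem_paths w nr /=; case: leqP => // /ltnW pN.
by case: presA => _ /(_ x p w pN); rewrite (negbTE nr).
Qed.

Lemma free_pbasis : free pbasis.
Proof. by case: presA => _ _ _ _ /basis_free. Qed.

Lemma span_pbasis y : y \in span pbasis.
Proof. by case: presA => _ _ _ _ /andP[/eqP-> _]; apply: memvf. Qed.

Lemma uniq_paths : uniq paths.
Proof. exact: map_uniq (free_uniq free_pbasis). Qed.

Lemma nth_pbasis (i : 'I_n) : pbasis`_i = bv i.
Proof. by rewrite -tnth_nth tnth_map. Qed.

Lemma walk_tnth i : walk (tnth P i).1 (tnth P i).2.
Proof.
by have := mem_tnth i P; case: (tnth P i) => x p; rewrite mem_paths => /andP[].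
Qed.

Lemma size_tnth i : (size (tnth P i).2 <= N)%N.
Proof.
by have := mem_tnth i P; case: (tnth P i) => x p; rewrite mem_paths => /and3P[].
Qed.

Lemma coord_wval i q :
  q \in paths -> coordA i (wv q.1 q.2) = (tnth P i == q)%:R.
Proof.
move=> /(tnthP P)[j ->]; rewrite -nth_pbasis coord_free ?free_pbasis //.
by rewrite (inj_eq (tuple_uniqP P uniq_paths)) eq_sym.
Qed.

Lemma coord_bvM_neq0 m i j : coordA m (bv i * bv j) != 0 ->
  last (tnth P i).1 (map tgt (tnth P i).2) = (tnth P j).1 /\
  tnth P m = ((tnth P i).1, (tnth P i).2 ++ (tnth P j).2).
Proof.
rewrite wvalM ?walk_tnth //.
case: ifP => [/eqP ij | _]; last by rewrite raddf0 eqxx.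
have w : walk (tnth P i).1 ((tnth P i).2 ++ (tnth P j).2).
  by apply: walk_cat; rewrite ?walk_tnth // ij walk_tnth.
have [-> | q_in] := wval_eq0_or_path w; first by rewrite raddf0 eqxx.
rewrite (coord_wval _ q_in) => nz; split=> //; apply/eqP.
by apply/negPn/negP => /negbTE ne; rewrite ne eqxx in nz.
Qed.

Lemma nil_in_paths x : (x, [::]) \in paths.
Proof.
rewrite mem_paths leq0n andbT; apply/existsP => -[i /existsP[j /andP[_ r]]].
by case: presA => /(_ _ r) + _ _ _ _; rewrite take_oversize ?drop_oversize.
Qed.

Fact vidx_subproof x : (index (x, [::]) paths < n)%N.
Proof. by rewrite index_mem nil_in_paths. Qed.

Definition vidx x : 'I_n := Ordinal (vidx_subproof x).

Lemma tnth_vidx x : tnth P (vidx x) = (x, [::]).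
Proof. by rewrite (tnth_nth (x, [::])) nth_index ?nil_in_paths. Qed.

Lemma vidxE i x : tnth P i = (x, [::]) -> i = vidx x.
Proof. by rewrite -tnth_vidx => /(tuple_uniqP P uniq_paths). Qed.

Definition vchar x : {scalar A} := coordA (vidx x).

Lemma vcharE w y : vchar w y = coordA (vidx w) y.
Proof. by []. Qed.

Lemma vchar_bv w i : vchar w (bv i) = (tnth P i == (w, [::]))%:R.
Proof. by rewrite vcharE coord_wval ?mem_tnth // tnth_vidx eq_sym. Qed.

Lemma vchar_e w x : vchar w (e x) = (x == w)%:R.
Proof.
rewrite -wval_nil vcharE (coord_wval _ (nil_in_paths x)) tnth_vidx.
by rewrite xpair_eqE eqxx andbT eq_sym.
Qed.

Lemma vchar_path w x b p : walk x (b :: p) -> vchar w (wv x (b :: p)) = 0.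
Proof.
move=> wp; have [-> | q_in] := wval_eq0_or_path wp; first exact: raddf0.
by rewrite vcharE (coord_wval _ q_in) tnth_vidx xpair_eqE andbF.
Qed.

Lemma vchar_bvM w i j : vchar w (bv i * bv j) = vchar w (bv i) * vchar w (bv j).
Proof.
rewrite !vchar_bv -natrM mulnb.
have [/andP[/eqP Pi /eqP Pj] | not_both] :=
  boolP ((tnth P i == (w, [::])) && (tnth P j == (w, [::]))).
  by rewrite Pi Pj /= !wval_nil mul_ee eqxx vchar_e eqxx.
apply/eqP/negPn/negP => /coord_bvM_neq0[].
rewrite tnth_vidx; move: not_both.
case: (tnth P i) => [xi pi]; case: (tnth P j) => [xj pj] /=.
case: pi pj => [|? ?] [|? ?] //= nb lastE [wE] //.
by rewrite -lastE -wE !eqxx in nb.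
Qed.

Lemma vcharM w y z : vchar w (y * z) = vchar w y * vchar w z.
Proof.
apply: scalar_mul_span span_pbasis _ y z => i j.
by rewrite !nth_pbasis vchar_bvM.
Qed.

Lemma vchar1 w : vchar w 1 = 1.
Proof.
by have := vchar_e w w; rewrite eqxx -{1}[e w]mulr1 vcharM vchar_e eqxx mul1r.
Qed.

(* y lies in the k-th power of the arrow ideal *)
Definition in_rad_pow k y :=
  forall i : 'I_n, (size (tnth P i).2 < k)%N -> coordA i y = 0.

Lemma in_rad_powM k y z :
  in_rad_pow k y -> in_rad_pow 1 z -> in_rad_pow k.+1 (y * z).
Proof.
move=> ky kz m mk; rewrite (coord_mul_expand _ (span_pbasis y) (span_pbasis z)).
rewrite big1 // => i _; rewrite big1 // => j _; rewrite !nth_pbasis.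
change (coordA i y * coordA j z * coordA m (bv i * bv j) = 0).
have [-> | /coord_bvM_neq0[_ Pm]] := eqVneq (coordA m (bv i * bv j)) 0.
  by rewrite mulr0.
move: mk; rewrite Pm size_cat => mk.
have [ik | ki] := ltnP (size (tnth P i).2) k; first by rewrite ky // !mul0r.
by rewrite (kz j) ?mulr0 ?mul0r //; lia.
Qed.

Lemma in_rad_pow_eq0 y : in_rad_pow N.+1 y -> y = 0.
Proof.
move=> Ny; rewrite (coord_span (span_pbasis y)) big1 // => i _.
by rewrite Ny ?scale0r // ltnS size_tnth.
Qed.

Lemma vchar_nil t : (forall w, vchar w t = 0) -> t ^+ N.+1 = 0.
Proof.
move=> t0; have t1 : in_rad_pow 1 t.
  move=> i; rewrite ltnS leqn0 size_eq0 => /eqP pnil.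
  rewrite (@vidxE i (tnth P i).1); first exact: t0.
  by rewrite {1}[tnth P i]surjective_pairing pnil.
have tk k : in_rad_pow k (t ^+ k).
  by elim: k => [|k IH] //; rewrite exprSr; apply: in_rad_powM.
exact/in_rad_pow_eq0/tk.
Qed.

Lemma center_of_comm_gens z :
  (forall x, e x * z = z * e x) -> (forall b, a b * z = z * a b) ->
  z \in 'Z(fullv)%VS.
Proof.
move=> ez az; rewrite memv_cap memvf -subv_cent1.
case: presA => _ _ _ _ /andP[/eqP <- _]; apply/span_subvP => _ /mapP[q _ ->].
apply: (@memvM _ _ 'C[z]%AS); first exact/cent1vP.
by apply: memv_prod => [|b]; [apply: cent1v1 | apply/cent1vP].
Qed.

Section Gluing.
Variables (u v : V) (c1 c2 : A).
Hypotheses (c1_block : block_idem c1) (c2_block : block_idem c2).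
Hypotheses (c12 : c1 + c2 = 1) (u_c1 : e u * c1 = e u) (v_c2 : e v * c2 = e v).

Local Notation B := (glued e a u v).

Lemma mul_uv_eq0 y : e u * y * e v = 0.
Proof.
by case: c1_block => c1Z _ _; apply: across_blocks_eq0 c1Z c12 u_c1 v_c2.
Qed.

Lemma mul_vu_eq0 y : e v * y * e u = 0.
Proof.
case: c2_block => c2Z _ _.
by apply: across_blocks_eq0 c2Z _ v_c2 u_c1; rewrite addrC.
Qed.

Lemma glued_neq : u != v.
Proof.
apply/eqP => uv; have := vchar_e u u; have := mul_uv_eq0 1.
rewrite mulr1 -uv mul_ee eqxx => ->.
by rewrite raddf0 => /eqP; rewrite eq_sym oner_eq0.
Qed.

Lemma vchar_euv : vchar u (e u + e v) = 1 /\ vchar v (e u + e v) = 1.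
Proof.
rewrite !raddfD /= !vchar_e !eqxx (eq_sym v u) (negbTE glued_neq).
by rewrite add0r addr0.
Qed.

Lemma gens_in_glued : {subset glue_gens e a u v <= B}.
Proof. by move=> g g_gen; apply: (subvP (sub_agenv _)); apply: memv_span. Qed.

Lemma one_in_glued : 1 \in B.
Proof. by rewrite memvE; apply: sub1_agenv. Qed.

Lemma a_in_glued b : a b \in B.
Proof. by apply: gens_in_glued; rewrite !inE mem_cat map_f ?mem_enum ?orbT. Qed.

Lemma e_in_glued x : x != u -> x != v -> e x \in B.
Proof.
move=> xu xv; apply: gens_in_glued.
by rewrite !inE mem_cat map_f ?orbT // mem_filter xu xv mem_enum.
Qed.

Lemma bv_in_glued i : i != vidx u -> i != vidx v -> bv i \in B.
Proof.
have := walk_tnth i; case Pi: (tnth P i) => [x [|b p]] /= w iu iv.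
  rewrite wval_nil; apply: e_in_glued.
    by apply: contraNneq iu => xu; apply/eqP/vidxE; rewrite Pi xu.
  by apply: contraNneq iv => xv; apply/eqP/vidxE; rewrite Pi xv.
move: w; rewrite walk_cons => /andP[/eqP bx _].
rewrite /wval -bx big_cons mulrA mul_src_a.
by apply: memvM; [apply: a_in_glued | apply: memv_prod one_in_glued a_in_glued].
Qed.

Lemma glued_vchar_eq y : y \in B -> vchar u y = vchar v y.
Proof.
pose H := lker (linfun (vchar u : A -> K^o) - linfun (vchar v : A -> K^o)).
have memH w : (w \in H) = (vchar u w == vchar v w).
  by rewrite memv_ker add_lfunE opp_lfunE !lfunE /= subr_eq0.
have mulH w w' : w \in H -> w' \in H -> w * w' \in H.
  by rewrite !memH !vcharM => /eqP-> /eqP->.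
have gensH : {subset glue_gens e a u v <= H}.
  move=> g; rewrite memH in_cons mem_cat.
  case/or3P => [/eqP-> | /mapP[x + ->] | /mapP[b _ ->]].
  - by have [-> ->] := vchar_euv.
  - rewrite mem_filter => /andP[/andP[/negbTE xu /negbTE xv] _].
    by rewrite !vchar_e xu xv.
  - by rewrite wval_arrow !vchar_path // walk_cons eqxx.
have BH : (B <= H)%VS.
  apply: agenv_sub_modl; first by rewrite -memvE memH !vchar1.
  have spanH : (<<glue_gens e a u v>> <= H)%VS by apply/span_subvP.
  by apply/prodvP => g h /(subvP spanH) gH hH; apply: mulH.
by move=> /(subvP BH); rewrite memH => /eqP.
Qed.

Lemma vchar_eq_glued y : vchar u y = vchar v y -> y \in B.
Proof.
move=> uv_eq; have [euv_u euv_v] := vchar_euv.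
rewrite -(subrK (vchar u y *: (e u + e v)) y).
apply: memvD; last by apply/memvZ/gens_in_glued/mem_head.
set z := y - _; have [zu zv] : vchar u z = 0 /\ vchar v z = 0.
  by rewrite !raddfB /= !linearZ /= euv_u euv_v mulr1 -uv_eq subrr.
rewrite (coord_span (span_pbasis z)); apply: memv_suml => i _.
rewrite nth_pbasis.
have [-> | iu] := eqVneq i (vidx u); first by rewrite -vcharE zu scale0r mem0v.
have [-> | iv] := eqVneq i (vidx v); first by rewrite -vcharE zv scale0r mem0v.
exact/memvZ/bv_in_glued.
Qed.

Lemma mem_glued y : (y \in B) = (vchar u y == vchar v y).
Proof. by apply/idP/eqP; [apply: glued_vchar_eq | apply: vchar_eq_glued]. Qed.

Lemma center_glued_sub : ('Z(B) <= 'Z(fullv))%VS.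
Proof.
apply/subvP => z; rewrite memv_cap => /andP[_ /centvP zB].
have comm_B y : y \in B -> y * z = z * y by move=> /zB.
apply: center_of_comm_gens => [x|b]; last exact/comm_B/a_in_glued.
have [-> | xu] := eqVneq x u.
  apply: comm_idem_unlinked mul_ee sum_e mul_uv_eq0 mul_vu_eq0 _ => y yu yv.
  exact/comm_B/e_in_glued.
have [-> | xv] := eqVneq x v.
  apply: comm_idem_unlinked mul_ee sum_e mul_vu_eq0 mul_uv_eq0 _ => y yv yu.
  exact/comm_B/e_in_glued.
exact/comm_B/e_in_glued.
Qed.

Lemma mem_center_glued z :
  (z \in 'Z(B)%VS) = (z \in 'Z(fullv)%VS) && (vchar u z == vchar v z).
Proof.
apply/idP/andP => [zZB | [zZA zuv]].
  by rewrite (subvP center_glued_sub) // -mem_glued (subvP (centerv_sub _)).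
move: zZA; rewrite !memv_cap mem_glued zuv => /andP[_ /centvP zA].
by apply/centvP => y _; apply: zA (memvf y).
Qed.

Lemma vchar_c1 : vchar u c1 = 1 /\ vchar v c1 = 0.
Proof.
split.
  by move/(congr1 (vchar u)): u_c1; rewrite vcharM vchar_e eqxx mul1r.
case: c1_block c2_block => -[_ c1_idem] _ _ [c2Z _ _].
have /(congr1 (vchar v)) : e v * 1 * c1 = 0.
  by apply: across_blocks_eq0 c2Z _ v_c2 c1_idem; rewrite addrC.
by rewrite !vcharM vchar_e eqxx vchar1 !mul1r raddf0.
Qed.

Lemma dim_center_glued : \dim 'Z(fullv : {vspace A})%VS = (\dim 'Z(B)%VS).+1.
Proof.
have [c1u c1v] := vchar_c1; case: c1_block => -[c1ZA _] c1_neq0 _.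
have ZA_sum : 'Z(fullv)%VS = ('Z(B) + <[c1]>)%VS.
  apply/eqP; rewrite eqEsubv subv_add center_glued_sub -memvE c1ZA !andbT.
  apply/subvP => z zZA; rewrite -(subrK ((vchar u z - vchar v z) *: c1) z).
  apply: memv_add (memvZ _ (memv_line c1)).
  rewrite mem_center_glued memvB ?memvZ //= !raddfB /= !linearZ /= c1u c1v.
  by rewrite mulr1 mulr0 subr0 opprB addrC subrK.
have ZB_c1 : ('Z(B) :&: <[c1]> = 0)%VS.
  apply/eqP; rewrite -subv0; apply/subvP => y /memv_capP[yZB /vlineP[k yE]].
  move: yZB; rewrite yE mem_center_glued !linearZ /= c1u c1v mulr1 mulr0.
  move=> /andP[_ /eqP->].
  by rewrite scale0r mem0v.
by rewrite ZA_sum dimv_disjoint_sum // dim_vline c1_neq0 addn1.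
Qed.

Lemma jrad_center_glued x : jrad 'Z(B)%VS x <-> jrad 'Z(fullv)%VS x.
Proof.
have ZB1 : 1 \in 'Z(B)%VS by rewrite memv_cap one_in_glued centv1.
have ZA1 : (1 : A) \in 'Z(fullv)%VS by rewrite memv_cap memvf centv1.
have radB := jrad_charP (U := 'Z(B)%AS) vcharM vchar1 vchar_nil x ZB1.
have radA := jrad_charP (U := 'Z(fullv)%AS) vcharM vchar1 vchar_nil x ZA1.
split=> [/radB[xZB x0] | /radA[xZA x0]]; [apply/radA | apply/radB]; split=> //.
  exact: (subvP center_glued_sub).
by rewrite mem_center_glued xZA !x0 eqxx.
Qed.

End Gluing.
End MonomialAlgebra.


Theorem proposition6p7 (K : fieldType) (A : falgType K)
    (V E : finType) (src tgt : E -> V) (rels : pred (seq E)) (N : nat)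
    (e : V -> A) (a : E -> A) (u v : V) (c1 c2 : A) :
  monomial_presentation src tgt rels N e a ->
  block_idem c1 -> block_idem c2 -> c1 + c2 = 1 ->
  e u * c1 = e u -> e v * c2 = e v ->
  non_isolated src tgt u -> non_isolated src tgt v ->
  let B := glued e a u v in
  [/\ ('Z(B) <= 'Z(fullv))%VS,
      (forall x : A, jrad 'Z(B)%VS x <-> jrad 'Z(fullv)%VS x)
    & \dim 'Z(fullv : {vspace A})%VS = (\dim 'Z(B)%VS).+1].
Proof.
(* Non-isolation of u and v only matters for the quiver presentation of B. *)
move=> presA c1_block c2_block c12 u_c1 v_c2 _ _ B.
split.
- exact (center_glued_sub presA c1_block c2_block c12 u_c1 v_c2).
- exact (jrad_center_glued presA c1_block c2_block c12 u_c1 v_c2).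
- exact (dim_center_glued presA c1_block c2_block c12 u_c1 v_c2).
Qed.
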